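(* Let $\mathcal{E}$ be an even Dirichlet form on $L^2(X,m)$ and let $\mathfrak{D}$ be its Dirichlet space. Assume that every $f\in\mathfrak{D}$ is quasi-continuous, and let $C>0$. Then the following are equivalent: (i) every $f\in\mathfrak{D}$ is continuous and bounded (i.e. its quasi-continuous representative is a continuous bounded function on $X$), and $\|f\|_{L^\infty(X,m)}\le C\|f\|_{\mathfrak{D}}$ for all $f\in\mathfrak{D}$; (ii) $\mathrm{Cap}(\{x\})\ge \frac1C$ for every $x\in X$.
   Context: Standing setting: $X$ is a Hausdorff topological space and $m$ is a Borel measure on $X$ with full support, i.e. no nonempty open subset of $X$ has $m$-measure zero. $L^2(X,m)$ is the real $L^2$ space. A Dirichlet form is a functional $\mathcal{E}:L^2(X,m)\to[0,\infty]$ that is convex, lower semicontinuous and densely defined (its effective domain $\mathrm{dom}(\mathcal{E})=\{u:\mathcal{E}(u)<\infty\}$ is dense in $L^2(X,m)$), and such that for all $u,v\in L^2(X,m)$ and $\alpha>0$: (1) $\mathcal{E}(u\wedge v)+\mathcal{E}(u\vee v)\le \mathcal{E}(u)+\mathcal{E}(v)$; (2) $\mathcal{E}\big(v+\tfrac12((u-v+\alpha)_+-(u-v-\alpha)_-)\big)+\mathcal{E}\big(u-\tfrac12((u-v+\alpha)_+-(u-v-\alpha)_-)\big)\le \mathcal{E}(u)+\mathcal{E}(v)$, where $(\cdot)_+$, $(\cdot)_-$ denote positive and negative parts. $\mathcal{E}$ is called even if $\mathcal{E}(0)=0$ and $\mathcal{E}(-u)=\mathcal{E}(u)$ for all $u$.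 Set $\mathcal{E}_1(u)=\|u\|_{L^2(X,m)}^2+\mathcal{E}(u)$. The Dirichlet space is $\mathfrak{D}=\{u\in L^2(X,m):\exists\lambda>0,\ \mathcal{E}_1(\lambda u)<\infty\}$ with the Minkowski norm $\|u\|_{\mathfrak{D}}=\inf\{\lambda>0:\mathcal{E}_1(u/\lambda)\le 1\}$. Capacity: for $A\subseteq X$ let $\mathcal{L}_A=\{u\in L^2(X,m): u\ge 1\ m\text{-a.e. on } U \text{ for some open } U\supseteq A\}$ and define the norm-capacity $\mathrm{Cap}(A)=\inf\{\|u\|_{\mathfrak{D}}: u\in\mathcal{L}_A\}$ (with $\|u\|_{\mathfrak{D}}=\infty$ for $u\notin\mathfrak{D}$, $\inf\emptyset=\infty$). A function $f:X\to\mathbb{R}$ is quasi-continuous if for every $\varepsilon>0$ there is an open set $O\subseteq X$ with $\mathrm{Cap}(O)\le\varepsilon$ such that $f|_{X\setminus O}$ is continuous. An element $f\in L^2(X,m)$ is called quasi-continuous if it has a quasi-continuous representative, and $f$ is then identified with that representative. *)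

From HB Require Import structures.
From mathcomp Require Import all_boot all_order all_algebra.
From mathcomp Require Import all_classical all_reals all_analysis ess_sup_inf.
Set Implicit Arguments. Unset Strict Implicit. Unset Printing Implicit Defensive.
Import Order.TTheory GRing.Theory Num.Def Num.Theory.
Import numFieldNormedType.Exports.
Local Open Scope classical_set_scope.
Local Open Scope ring_scope.

Notation borelType X := (g_sigma_algebraType (@open X)).

Section Dirichlet.
Context {R : realType} {X : ptopologicalType}.
Variable m : {measure set (borelType X) -> \bar R}.

Definition full_support : Prop :=
  forall U : set X, open U -> U !=set0 -> m U <> 0%E.

(* Elements of L^2(X,m) are represented by square-integrable Borel functions;
   functionals on L^2 are functionals on such functions that do not
   distinguish m-a.e. equal functions. *)
Definition L2 (f : X -> R) : Prop :=
  measurable_fun (setT : set (borelType X)) f /\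
  (\int[m]_x ((f x) ^+ 2)%:E < +oo)%E.

Definition L2norm (f : X -> R) : R :=
  Num.sqrt (fine (\int[m]_x ((f x) ^+ 2)%:E)).

Definition ae_eqf (f g : X -> R) : Prop := {ae m, forall x, f x = g x}.

Definition posp (r : R) : R := Num.max r 0.
Definition negp (r : R) : R := Num.max (- r) 0.

Variable E : (X -> R) -> \bar R.

Record dirichlet_form : Prop := DirichletForm {
  df_wd : forall u v, L2 u -> L2 v -> ae_eqf u v -> E u = E v;
  df_nonneg : forall u, L2 u -> (0 <= E u)%E;
  df_convex : forall u v, L2 u -> L2 v -> forall t : R, 0 <= t <= 1 ->
    (E (fun x => (t * u x + (1 - t) * v x)%R) <= t%:E * E u + (1 - t)%:E * E v)%E;
  df_lsc : forall (u_ : nat -> X -> R) (u : X -> R),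
    (forall n, L2 (u_ n)) -> L2 u ->
    (fun n => L2norm (fun x => u_ n x - u x)) @ \oo --> (0 : R) ->
    (E u <= limn_einf (fun n => E (u_ n)))%E;
  df_dense : forall u, L2 u -> forall eps : R, 0 < eps ->
    exists v, L2 v /\ (E v < +oo)%E /\ L2norm (fun x => u x - v x) < eps;
  df_latt : forall u v, L2 u -> L2 v ->
    (E (fun x => Num.min (u x) (v x)) + E (fun x => Num.max (u x) (v x))
       <= E u + E v)%E;
  df_contr : forall u v, L2 u -> L2 v -> forall alpha : R, 0 < alpha ->
    let w := fun x => 2^-1 * (posp (u x - v x + alpha) - negp (u x - v x - alpha)) in
    (E (fun x => (v x + w x)%R) + E (fun x => (u x - w x)%R) <= E u + E v)%E
}.

Definition even_form : Prop :=
  E (fun _ => 0) = 0%E /\ forall u, L2 u -> E (fun x => - u x) = E u.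

Definition E1 (u : X -> R) : \bar R := ((L2norm u) ^+ 2)%:E + E u.

Definition inD (u : X -> R) : Prop :=
  L2 u /\ exists l : R, 0 < l /\ (E1 (fun x => (l * u x)%R) < +oo)%E.

(* Minkowski norm (inf of the empty set is +oo, so it is +oo off the
   Dirichlet space, for u in L^2) *)
Definition Dnorm (u : X -> R) : \bar R :=
  ereal_inf (EFin @` [set l : R | 0 < l /\ (E1 (fun x => (u x / l)%R) <= 1)%E]).

Definition LA (A : set X) : set (X -> R) :=
  [set u | L2 u /\ exists U : set X, open U /\ A `<=` U /\
                  {ae m, forall x, U x -> 1 <= u x}].

Definition Cap (A : set X) : \bar R := ereal_inf (Dnorm @` LA A).

Definition quasi_continuous (f : X -> R) : Prop :=
  forall eps : R, 0 < eps -> exists O : set X,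
    open O /\ (Cap O <= eps%:E)%E /\ {within ~` O, continuous f}.

Definition qc_elem (f : X -> R) : Prop :=
  exists g : X -> R, quasi_continuous g /\ ae_eqf f g.

Definition Linfnorm (f : X -> R) : \bar R :=
  ess_sup m (fun x => (`| f x |)%:E).

End Dirichlet.

From HB Require Import structures.
From mathcomp Require Import all_boot all_order all_algebra.
From mathcomp Require Import all_classical all_reals all_analysis ess_sup_inf.
From mathcomp Require Import measurable_realfun ring lra.
Set Implicit Arguments. Unset Strict Implicit. Unset Printing Implicit Defensive.
Import Order.TTheory GRing.Theory Num.Def Num.Theory.
Import numFieldNormedType.Exports.
Local Open Scope classical_set_scope.
Local Open Scope ring_scope.

(* If every f in the Dirichlet space has a continuous representative g, a point
   x with |g x| > t lies in an open set on which f / t >= 1, so f / t tests the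
   capacity of {x}: Cap {x} <= ||f||_D / t. Hence a uniform lower bound 1/C on
   the capacity of points is the same as the bound |g| <= C ||f||_D. Conversely,
   that capacity bound forces every exceptional open set of small capacity in
   the definition of quasi-continuity to be empty, so quasi-continuous means
   continuous; and the ess-sup bound for a test function u >= 1 near x uses full
   support to get ||u||_oo >= 1. *)

(* The library's hint for this instance does not fire for measures on
   [borelType X]. *)
#[local] Hint Extern 0 (Filter (nbhs (almost_everywhere ?mu))) =>
  (exact: (ae_filter_ringOfSetsType mu)) : typeclass_instances.

Section L2_space.
Context {R : realType} {X : ptopologicalType}.
Variable m : {measure set (borelType X) -> \bar R}.
Implicit Types f : X -> R.

Lemma measurable_EFin_sqr f : measurable_fun (setT : set (borelType X)) f ->
  measurable_fun (setT : set (borelType X)) (fun x => ((f x) ^+ 2)%:E).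
Proof. by move=> mf; apply/measurable_EFinP; exact: measurable_funX. Qed.

Lemma integral_sqr_ge0 f : (0 <= \int[m]_x ((f x) ^+ 2)%:E)%E.
Proof. by apply: integral_ge0 => x _; rewrite lee_fin sqr_ge0. Qed.

Lemma integral_sqrZ (c : R) f : measurable_fun (setT : set (borelType X)) f ->
  (\int[m]_x ((c * f x) ^+ 2)%:E = (c ^+ 2)%:E * \int[m]_x ((f x) ^+ 2)%:E)%E.
Proof.
move=> mf; rewrite -ge0_integralZl_EFin ?sqr_ge0 //.
- by apply: eq_integral => x _; rewrite exprMn EFinM.
- by move=> x _; rewrite lee_fin sqr_ge0.
- exact: measurable_EFin_sqr.
Qed.

Lemma L2Z (c : R) f : L2 m f -> L2 m (fun x => c * f x).
Proof.
move=> [mf fi]; split; first exact: measurable_funM.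
have : (\int[m]_x ((f x) ^+ 2)%:E)%E \is a fin_num.
  by rewrite ge0_fin_numE ?integral_sqr_ge0.
by rewrite integral_sqrZ // => /fineK <-; rewrite -EFinM ltry.
Qed.

Lemma L2N f : L2 m f -> L2 m (fun x => - f x).
Proof.
by move=> /(L2Z (-1)); under eq_fun do rewrite mulN1r.
Qed.

Lemma L2_cst0 : L2 m (fun _ => 0).
Proof.
split; first exact: measurable_cst.
rewrite (eq_integral (cst 0%E)) ?integral0 ?ltry // => x _.
by rewrite expr0n.
Qed.

Lemma L2norm_sqr f : L2norm m f ^+ 2 = fine (\int[m]_x ((f x) ^+ 2)%:E)%E.
Proof. by rewrite sqr_sqrtr // fine_ge0 // integral_sqr_ge0. Qed.

Lemma L2normZ_sqr (c : R) f : L2 m f ->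
  L2norm m (fun x => c * f x) ^+ 2 = c ^+ 2 * L2norm m f ^+ 2.
Proof.
move=> [mf fi]; rewrite !L2norm_sqr integral_sqrZ // fineM //.
by rewrite ge0_fin_numE ?integral_sqr_ge0.
Qed.

Lemma L2normN f : L2norm m (fun x => - f x) = L2norm m f.
Proof.
by rewrite /L2norm; under eq_integral do rewrite sqrrN.
Qed.

End L2_space.

Section capacity.
Context {R : realType} {X : ptopologicalType}.
Variable m : {measure set (borelType X) -> \bar R}.
Variable E : (X -> R) -> \bar R.
Implicit Types f u : X -> R.

Lemma Dnorm_ge0 f : (0 <= Dnorm m E f)%E.
Proof.
by apply: le_ereal_inf_tmp => _ [l [l0 _] <-]; rewrite lee_fin ltW.
Qed.

Lemma Dnorm_le f (l : R) : 0 < l -> (E1 m E (fun x => (f x / l)%R) <= 1)%E ->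
  (Dnorm m E f <= l%:E)%E.
Proof. by move=> l0 El; apply: ereal_inf_lbound; exists l. Qed.

Lemma Dnorm_ltP f (r : R) : (Dnorm m E f < r%:E)%E ->
  exists2 l : R, 0 < l < r & (E1 m E (fun x => (f x / l)%R) <= 1)%E.
Proof.
move=> /ereal_inf_lt[_ [l [l0 El] <-]]; rewrite lte_fin => lr.
by exists l; rewrite ?l0.
Qed.

Lemma Cap_le_Dnorm (A : set X) u : LA m A u -> (Cap m E A <= Dnorm m E u)%E.
Proof. by move=> Au; apply: ereal_inf_lbound; exists u. Qed.

Lemma Cap_subset (A B : set X) : A `<=` B -> (Cap m E A <= Cap m E B)%E.
Proof.
move=> AB; apply: ereal_inf_le_tmp; apply: image_subset.
move=> u [Lu [U [oU [BU aeU]]]]; split => //.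
by exists U; split => //; split => //; exact: subset_trans BU.
Qed.

Lemma LA_point_div h g x (t : R) : L2 m h -> ae_eqf m h g -> continuous g ->
  0 < t < g x -> LA m [set x] (fun y => h y / t).
Proof.
move=> Lh hg cg /andP[t0 tgx]; split.
  by under eq_fun do rewrite mulrC; exact: L2Z.
exists (g @^-1` [set r | t < r]); split.
  by apply: open_comp; [move=> y _; exact: cg | exact: open_gt].
split; first by move=> y ->.
apply: filterS hg => y hgy /= tgy.
by rewrite ler_pdivlMr // mul1r hgy ltW.
Qed.

Lemma Cap_point_le h g x (t l : R) : L2 m h -> ae_eqf m h g -> continuous g ->
  0 < t < g x -> 0 < l -> (E1 m E (fun y => (h y / l)%R) <= 1)%E ->
  (Cap m E [set x] <= (l / t)%:E)%E.
Proof.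
move=> Lh hg cg /[dup] /andP[t0 _] tgx l0 El.
apply: le_trans (Cap_le_Dnorm (LA_point_div Lh hg cg tgx)) _.
apply: Dnorm_le; first exact: divr_gt0.
have -> // : (fun y => h y / t / (l / t)) = (fun y => h y / l).
by apply: funext => y; field; rewrite !gt_eqF.
Qed.

Hypothesis hE : even_form m E.

Lemma E1N f : L2 m f -> E1 m E (fun x => - f x) = E1 m E f.
Proof. by move=> Lf; rewrite /E1 L2normN hE.2. Qed.

Lemma Dnorm_N f : L2 m f -> Dnorm m E (fun x => - f x) = Dnorm m E f.
Proof.
move=> Lf; rewrite /Dnorm; congr (ereal_inf (EFin @` _)).
apply/seteqP; split => l [l0 El]; split => //.
- move: El; under eq_fun do rewrite mulNr.
  by rewrite E1N //; under eq_fun do rewrite mulrC; exact: L2Z.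
- under eq_fun do rewrite mulNr.
  by rewrite E1N //; under eq_fun do rewrite mulrC; exact: L2Z.
Qed.

Hypothesis hD : dirichlet_form m E.

Lemma E_scale_le v (s : R) : L2 m v -> 0 <= s <= 1 ->
  (E (fun x => (s * v x)%R) <= s%:E * E v)%E.
Proof.
move=> Lv s01; have := df_convex hD Lv (L2_cst0 m) s01.
by under eq_fun do rewrite mulr0 addr0; rewrite hE.1 mule0 adde0.
Qed.

(* If E1 (l f) is finite, shrinking l f by the factor s = 1/(1 + E1 (l f))
   brings E1 below 1, since E1 (s v) <= s E1 v for s <= 1 by convexity. *)
Lemma Dnorm_fin_num f : inD m E f -> Dnorm m E f \is a fin_num.
Proof.
move=> [Lf [l [l0 Efin]]]; rewrite ge0_fin_numE ?Dnorm_ge0 //.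
set v := fun x => l * f x; have Lv : L2 m v by exact: L2Z.
set A := L2norm m v ^+ 2; have A0 : 0 <= A by exact: sqr_ge0.
have Ev0 : (0 <= E v)%E := df_nonneg hD Lv.
have Evfin : E v \is a fin_num.
  rewrite ge0_fin_numE //; apply: le_lt_trans Efin.
  by rewrite leeDr // lee_fin.
set b := fine (E v); have b0 : 0 <= b by exact: fine_ge0.
set s := (1 + A + b)^-1.
have s0 : 0 < s by rewrite invr_gt0; lra.
have s1 : s <= 1 by rewrite invf_le1; lra.
have sA : s * (1 + A + b) = 1 by rewrite mulVf //; lra.
apply: le_lt_trans (ltry (s * l)^-1).
apply: Dnorm_le; first by rewrite invr_gt0 mulr_gt0.
have -> : (fun x => f x / (s * l)^-1) = (fun x => s * v x).
  by apply: funext => x; rewrite /v invrK; ring.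
rewrite /E1 L2normZ_sqr //.
apply: le_trans (_ : ((s ^+ 2 * A)%:E + s%:E * E v <= _)%E).
  by rewrite leeD2l // E_scale_le // (ltW s0) s1.
rewrite -(fineK Evfin) -/b -EFinM -EFinD lee_fin.
have := mulr_ge0 (ltW s0) A0; nra.
Qed.

End capacity.

Lemma Linfnorm_ge1_LA {R : realType} {X : ptopologicalType}
  (m : {measure set (borelType X) -> \bar R}) (u : X -> R) x :
  full_support m -> LA m [set x] u -> (1 <= Linfnorm m u)%E.
Proof.
move=> fs [_ [U [oU [xU aeU]]]].
rewrite leNgt; apply/negP => u_lt1.
have [N [mN N0 sN]] : {ae m, forall y, ~ U y}.
  apply: filterS2 (ess_sup_ge m (fun y => (`|u y|)%:E)) aeU => y uyle uy1 Uy.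
  suff : (1 <= Linfnorm m u)%E by rewrite leNgt u_lt1.
  by apply: le_trans uyle; rewrite lee_fin (le_trans (uy1 Uy)) ?ler_norm.
have UN : U `<=` N by move=> y Uy; apply: sN => /=; apply.
have mU : measurable (U : set (borelType X)) by exact: sub_gen_smallest.
by apply: (fs U oU); [exists x; exact: xU | exact: subset_measure0 mU mN UN N0].
Qed.

Lemma Cap_point_ge_Linfnorm_bound {R : realType} {X : ptopologicalType}
  (m : {measure set (borelType X) -> \bar R}) (E : (X -> R) -> \bar R) (C : R) x :
  full_support m -> 0 < C ->
  (forall f, inD m E f -> (Linfnorm m f <= C%:E * Dnorm m E f)%E) ->
  ((C^-1)%:E <= Cap m E [set x])%E.
Proof.
move=> fs C0 hLinf; apply: le_ereal_inf_tmp => _ [u xu <-].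
have [Dufin|] := boolP (Dnorm m E u \is a fin_num); last first.
  by rewrite ge0_fin_numE ?Dnorm_ge0 // -leNgt leye_eq => /eqP ->; exact: leey.
have [l /andP[l0 _] El] := @Dnorm_ltP _ _ m E u (fine (Dnorm m E u) + 1)
  ltac:(by rewrite -(fineK Dufin) lte_fin ltrDl).
have Du : inD m E u.
  split; first exact: xu.1.
  exists l^-1; split; first by rewrite invr_gt0.
  by under eq_fun do rewrite mulrC; exact: le_lt_trans El (ltry _).
have := le_trans (Linfnorm_ge1_LA fs xu) (hLinf u Du).
rewrite -(fineK Dufin) -EFinM !lee_fin => CD1.
by rewrite -[C^-1]mulr1 ler_pdivrMl.
Qed.

Section points_of_positive_capacity.
Context {R : realType} {X : ptopologicalType}.
Variable m : {measure set (borelType X) -> \bar R}.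
Variable E : (X -> R) -> \bar R.
Variable C : R.
Hypothesis C0 : 0 < C.
Hypothesis Cap_point_ge : forall x : X, ((C^-1)%:E <= Cap m E [set x])%E.

Lemma Cap_lt_empty (U : set X) : (Cap m E U < (C^-1)%:E)%E -> U = set0.
Proof.
move=> CapU; apply/seteqP; split => // y Uy.
have := le_trans (Cap_point_ge y) (Cap_subset m E (_ : [set y] `<=` U)).
by rewrite leNgt CapU => /(_ ltac:(by move=> _ ->)).
Qed.

Lemma quasi_continuous_continuous g : quasi_continuous m E g -> continuous g.
Proof.
move=> qg; have e0 : 0 < C^-1 / 2 by rewrite divr_gt0 // invr_gt0.
have [U [_ [CapU_le cgU]]] := qg _ e0.
have CapU : (Cap m E U < (C^-1)%:E)%E.
  by apply: le_lt_trans CapU_le _; rewrite lte_fin ltr_pdivrMr // ltr_pMr ?invr_gt0 // ltr1n.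
rewrite (Cap_lt_empty CapU) setC0 continuous_open_subspace in cgU; last exact: openT.
by move=> y; apply: cgU; exact: in_setT.
Qed.

(* If g y exceeded C ||f||_D, some t in between and l < t / C admissible for
   ||f||_D would give Cap {y} <= l / t < 1/C. *)
Lemma continuous_rep_le f g y : L2 m f -> ae_eqf m f g -> continuous g ->
  Dnorm m E f \is a fin_num -> g y <= C * fine (Dnorm m E f).
Proof.
move=> Lf fg cg Dfin; set d := fine (Dnorm m E f).
have d0 : 0 <= d by exact/fine_ge0/Dnorm_ge0.
rewrite leNgt; apply/negP => gy_gt.
set t := (C * d + g y) / 2.
have Cd0 : 0 <= C * d by rewrite mulr_ge0 // ltW.
have tgy : 0 < t < g y by apply/andP; rewrite /t; split; lra.
have Dlt : (Dnorm m E f < (t / C)%:E)%E.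
  by rewrite -(fineK Dfin) lte_fin ltr_pdivlMr // mulrC -/d /t; lra.
have [l /andP[l0 lt] El] := Dnorm_ltP Dlt.
have := le_trans (Cap_point_ge y) (Cap_point_le Lf fg cg tgy l0 El).
by rewrite lee_fin ler_pdivlMr ?(andP tgy).1 // mulrC leNgt lt.
Qed.

Hypothesis hE : even_form m E.

Lemma continuous_rep_norm_le f g y : L2 m f -> ae_eqf m f g -> continuous g ->
  Dnorm m E f \is a fin_num -> `|g y| <= C * fine (Dnorm m E f).
Proof.
move=> Lf fg cg Dfin; rewrite ler_norml; apply/andP; split.
  rewrite lerNl -(Dnorm_N hE Lf).
  apply: (@continuous_rep_le _ (fun z => - g z)) (L2N Lf) _ _ _.
  - by apply: filterS fg => z ->.
  - by move=> z; apply: continuousN; exact: cg.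
  - by rewrite Dnorm_N.
exact: continuous_rep_le.
Qed.

End points_of_positive_capacity.

Lemma Linfnorm_le_ae_bound {R : realType} {X : ptopologicalType}
  (m : {measure set (borelType X) -> \bar R}) (f g : X -> R) (M : R) :
  ae_eqf m f g -> (forall x, `|g x| <= M) -> (Linfnorm m f <= M%:E)%E.
Proof.
by move=> fg gM; apply/ess_supP; apply: filterS fg => x ->; rewrite lee_fin.
Qed.

Theorem mainTheorem3 (R : realType) (X : ptopologicalType)
  (m : {measure set (borelType X) -> \bar R}) (E : (X -> R) -> \bar R) (C : R) :
  hausdorff_space X -> full_support m ->
  dirichlet_form m E -> even_form m E ->
  (forall f, inD m E f -> qc_elem m E f) ->
  0 < C ->
  ((forall f, inD m E f ->
      exists g : X -> R, continuous g /\ (exists M : R, forall x, `| g x | <= M)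
                         /\ ae_eqf m f g) /\
   (forall f, inD m E f -> (Linfnorm m f <= C%:E * Dnorm m E f)%E))
  <->
  (forall x : X, ((C^-1)%:E <= Cap m E [set x])%E).
Proof.
move=> _ fs hD hE hqc C0; split.
  by move=> [_ hLinf] x; exact: Cap_point_ge_Linfnorm_bound.
move=> Cap_point_ge.
have rep f : inD m E f -> exists g, continuous g /\ ae_eqf m f g /\
    forall x, `|g x| <= C * fine (Dnorm m E f).
  move=> Df; have [g [qg fg]] := hqc f Df.
  have cg := quasi_continuous_continuous C0 Cap_point_ge qg.
  exists g; split => //; split => // x.
  exact: continuous_rep_norm_le Df.1 fg cg (Dnorm_fin_num hE hD Df).
split=> f Df; have [g [cg [fg gle]]] := rep f Df.
  by exists g; do 2!split => //; exists (C * fine (Dnorm m E f)).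
rewrite -(fineK (Dnorm_fin_num hE hD Df)) -EFinM.
exact: Linfnorm_le_ae_bound fg gle.
Qed.
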